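(* Let two balanced mass action chemical reaction networks (networks 1 and 2) share all their boundary chemical species $x_b\in\mathbb{R}^b_+$: network 1 has species vector $(\hat x_1,x_b)$, complex stoichiometric matrix $Z_1=\begin{bmatrix}\hat Z_1\\ Z_{b1}\end{bmatrix}$, incidence matrix $B_1$ and vector of equilibrium constants $K_1^{eq}$; network 2 has species vector $(x_b,\hat x_2)$, complex stoichiometric matrix $Z_2=\begin{bmatrix}Z_{b2}\\ \hat Z_2\end{bmatrix}$, incidence matrix $B_2$ and vector of equilibrium constants $K_2^{eq}$. Then the interconnected network is again balanced if and only if there exist $\hat x_1^{**},\hat x_2^{**},x_b^{**}$ with positive entries such that $$\mathrm{Ln}\begin{bmatrix}K_1^{eq}\\ K_2^{eq}\end{bmatrix}=\begin{bmatrix}B_1^T\hat Z_1^T & 0 & B_1^TZ_{b1}^T\\ 0 & B_2^T\hat Z_2^T & B_2^TZ_{b2}^T\end{bmatrix}\mathrm{Ln}\begin{bmatrix}\hat x_1^{**}\\ \hat x_2^{**}\\ x_b^{**}\end{bmatrix}.$$ Such a thermodynamic equilibrium of the interconnected network exists if there is a partition $\{1,\dots,b\}=I_1\cup I_2$ such that all columns of $B_1^TZ_{b1}^T$ with index in $I_1$ lie in $\operatorname{im} B_1^T\hat Z_1^T$, and all columns of $B_2^TZ_{b2}^T$ with index in $I_2$ lie in $\operatorname{im} B_2^T\hat Z_2^T$.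
   Context: A mass action network has species concentrations $x\in\mathbb{R}^m_+$, complexes (distinct left/right-hand sides of reactions) and reactions; its complex stoichiometric matrix $Z$ has as $\rho$-th column the species composition of complex $\rho$; its complex graph has an edge for each reaction $j$ from the substrate complex $\mathcal{S}_j$ to the product complex $\mathcal{P}_j$, with incidence matrix $B$ ($-1$ at tail, $+1$ at head). Rates $v_j(x)=k_j^{\mathrm{forw}}\exp(Z_{\mathcal{S}_j}^T\mathrm{Ln}(x))-k_j^{\mathrm{rev}}\exp(Z_{\mathcal{P}_j}^T\mathrm{Ln}(x))$, dynamics $\dot x=ZBv(x)$. A thermodynamic equilibrium is $x^*\in\mathbb{R}^m_+$ with $v(x^* )=0$; the network is balanced if one exists (then all $k_j^{\mathrm{forw}},k_j^{\mathrm{rev}}>0$). The vector of equilibrium constants $K^{eq}$ has entries $k_j^{\mathrm{forw}}/k_j^{\mathrm{rev}}$. $\mathrm{Ln}$ is the componentwise logarithm. The interconnected network has species vector $(\hat x_1,x_b,\hat x_2)$ (the shared species $x_b$ identified), reaction set the union of the reactions of both networks with the same rate constants, complex-graph incidence matrix $B=\begin{bmatrix}B_1&0\\0&B_2\end{bmatrix}$, and complex stoichiometric matrix $Z=\begin{bmatrix}\hat Z_1&0\\ Z_{b1}&Z_{b2}\\ 0&\hat Z_2\end{bmatrix}$; its equilibrium constant vector is $(K_1^{eq},K_2^{eq})$. *)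

From HB Require Import structures.
From mathcomp Require Import all_boot all_order all_algebra.
From mathcomp Require Import all_classical all_reals all_analysis.
Set Implicit Arguments. Unset Strict Implicit. Unset Printing Implicit Defensive.
Import Order.TTheory GRing.Theory Num.Theory.
Local Open Scope ring_scope.

Section MassAction.
Variable R : realType.

Definition Lnv (m : nat) (x : 'cV[R]_m) : 'cV[R]_m := map_mx (@ln R) x.

Definition posv (m : nat) (x : 'cV[R]_m) : Prop := forall i, 0 < x i 0.

(* incidence matrix of the complex graph: reaction j is an edge from the
   substrate complex S j to the product complex P j; -1 at tail, +1 at head *)
Definition incidence (c r : nat) (S P : 'I_r -> 'I_c) : 'M[R]_(c, r) :=
  \matrix_(i, j) ((i == P j)%:R - (i == S j)%:R).

Definition rate (m c r : nat) (Z : 'M[R]_(m, c)) (S P : 'I_r -> 'I_c)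
  (kf kr : 'I_r -> R) (x : 'cV[R]_m) : 'cV[R]_r :=
  \col_j (kf j * expR (((col (S j) Z)^T *m Lnv x) 0 0)
          - kr j * expR (((col (P j) Z)^T *m Lnv x) 0 0)).

Definition thermo_eq (m c r : nat) (Z : 'M[R]_(m, c)) (S P : 'I_r -> 'I_c)
  (kf kr : 'I_r -> R) (x : 'cV[R]_m) : Prop :=
  posv x /\ rate Z S P kf kr x = 0.

Definition balanced (m c r : nat) (Z : 'M[R]_(m, c)) (S P : 'I_r -> 'I_c)
  (kf kr : 'I_r -> R) : Prop :=
  exists x : 'cV[R]_m, thermo_eq Z S P kf kr x.

Definition Keq (r : nat) (kf kr : 'I_r -> R) : 'cV[R]_r :=
  \col_j (kf j / kr j).

Definition join_cplx (c1 c2 r1 r2 : nat) (S1 : 'I_r1 -> 'I_c1)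
  (S2 : 'I_r2 -> 'I_c2) (j : 'I_(r1 + r2)) : 'I_(c1 + c2) :=
  match fintype.split j with
  | inl j1 => lshift c2 (S1 j1)
  | inr j2 => rshift c1 (S2 j2)
  end.

Definition join_const (r1 r2 : nat) (k1 : 'I_r1 -> R) (k2 : 'I_r2 -> R)
  (j : 'I_(r1 + r2)) : R :=
  match fintype.split j with
  | inl j1 => k1 j1
  | inr j2 => k2 j2
  end.

(* complex stoichiometric matrix of the interconnected network,
   species ordered (xhat1, xb, xhat2) *)
Definition interZ (n1 b n2 c1 c2 : nat) (Zh1 : 'M[R]_(n1, c1))
  (Zb1 : 'M[R]_(b, c1)) (Zb2 : 'M[R]_(b, c2)) (Zh2 : 'M[R]_(n2, c2))
  : 'M[R]_(n1 + b + n2, c1 + c2) :=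
  col_mx (col_mx (row_mx Zh1 0) (row_mx Zb1 Zb2)) (row_mx 0 Zh2).

End MassAction.

From HB Require Import structures.
From mathcomp Require Import all_boot all_order all_algebra.
From mathcomp Require Import all_classical all_reals all_analysis.
Import Order.TTheory GRing.Theory Num.Theory.
Set Implicit Arguments. Unset Strict Implicit.
Local Open Scope ring_scope.

(* Mass action rates vanish exactly when [Ln Keq = B^T Z^T Ln x]: reaction j is in
   equilibrium iff [ln (kf_j / kr_j)] is the difference of the log-monomials of its
   product and substrate complexes.  Since [Ln] maps positive vectors onto all vectors,
   balancedness is solvability of this linear system, and for the interconnection the
   system has the bordered block-diagonal matrix of the statement.  Given solutions
   [(u1, w1)] and [(u2, w2)] of the two networks, the common boundary vector [w]
   equal to [w2] on [I1] and to [w1] elsewhere still works: [C1 (w - w1)] only involves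
   columns of [C1] indexed by [I1], which lie in the image of [A1], so the change is
   absorbed into [u1]; symmetrically for network 2, as [w - w2] vanishes outside [I2]. *)

Section BlockLinearAlgebra.
Variable R : pzRingType.

Lemma mulmx_col_image (p n b : nat) (A : 'M[R]_(p, n)) (C : 'M[R]_(p, b))
    (I : {set 'I_b}) (d : 'cV[R]_b) :
  (forall k, k \in I -> exists y, col k C = A *m y) ->
  (forall k, k \notin I -> d k 0 = 0) ->
  exists y, C *m d = A *m y.
Proof.
move=> colI d0.
have /choice [yf yfP] : forall k, exists y, k \in I -> col k C = A *m y.
  move=> k; case: (boolP (k \in I)) => [/colI [y ->]|kI]; last by exists 0.
  by exists y.
pose Y : 'M[R]_(n, b) := \matrix_(i, k) yf k i 0.
exists (Y *m d); rewrite mulmxA; apply/matrixP => i j; rewrite ord1 !mxE.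
apply: eq_bigr => k _; case: (boolP (k \in I)) => kI; last by rewrite d0 ?mulr0.
have colY : col k (A *m Y) = col k C.
  rewrite colE -mulmxA -colE yfP //; congr (_ *m _).
  by apply/matrixP => l m; rewrite ord1 !mxE.
by have /matrixP/(_ i 0) := colY; rewrite !mxE => ->.
Qed.

Lemma common_boundary_solution (p1 p2 n1 n2 b : nat)
    (A1 : 'M[R]_(p1, n1)) (C1 : 'M[R]_(p1, b))
    (A2 : 'M[R]_(p2, n2)) (C2 : 'M[R]_(p2, b)) (I1 I2 : {set 'I_b}) :
  I1 :|: I2 = [set: 'I_b] ->
  (forall k, k \in I1 -> exists y, col k C1 = A1 *m y) ->
  (forall k, k \in I2 -> exists y, col k C2 = A2 *m y) ->
  forall (u1 : 'cV[R]_n1) (u2 : 'cV[R]_n2) (w1 w2 : 'cV[R]_b),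
  exists u1' u2' w,
    A1 *m u1' + C1 *m w = A1 *m u1 + C1 *m w1 /\
    A2 *m u2' + C2 *m w = A2 *m u2 + C2 *m w2.
Proof.
move=> I12 colI1 colI2 u1 u2 w1 w2.
pose w : 'cV[R]_b := \col_k (if k \in I1 then w2 k 0 else w1 k 0).
have [y1 ey1] : exists y, C1 *m (w - w1) = A1 *m y.
  by apply: mulmx_col_image colI1 _ => k kI1; rewrite !mxE (negbTE kI1) subrr.
have [y2 ey2] : exists y, C2 *m (w - w2) = A2 *m y.
  apply: mulmx_col_image colI2 _ => k kI2; rewrite !mxE.
  have : k \in I1 :|: I2 by rewrite I12 inE.
  by rewrite inE (negbTE kI2) orbF => ->; rewrite subrr.
exists (u1 - y1), (u2 - y2), w; split.
- by rewrite mulmxBr -ey1 mulmxBr opprB addrA subrK.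
- by rewrite mulmxBr -ey2 mulmxBr opprB addrA subrK.
Qed.

Lemma mul_bordered_diag_mx (p1 p2 n1 n2 b : nat)
    (A1 : 'M[R]_(p1, n1)) (A2 : 'M[R]_(p2, n2))
    (C1 : 'M[R]_(p1, b)) (C2 : 'M[R]_(p2, b))
    (u1 : 'cV[R]_n1) (u2 : 'cV[R]_n2) (ub : 'cV[R]_b) :
  row_mx (row_mx (col_mx A1 0) (col_mx 0 A2)) (col_mx C1 C2)
    *m col_mx (col_mx u1 u2) ub =
  col_mx (A1 *m u1 + C1 *m ub) (A2 *m u2 + C2 *m ub).
Proof.
by rewrite !mul_row_col !mul_col_mx !mul0mx !add_col_mx addr0 add0r.
Qed.

End BlockLinearAlgebra.

Section MassAction.
Variable R : realType.

Lemma rate_eq0_ln (kf kr a b : R) : 0 < kf -> 0 < kr ->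
  kf * expR a - kr * expR b = 0 <-> ln (kf / kr) = b - a.
Proof.
move=> kf_gt0 kr_gt0.
have kr_neq0 := lt0r_neq0 kr_gt0; have ea_neq0 := lt0r_neq0 (expR_gt0 a).
transitivity (kf / kr = expR (b - a)).
  rewrite expRB; split=> [/eqP | /eqP].
  - by rewrite subr_eq0 => /eqP e; apply/eqP; rewrite eqr_div // e mulrC.
  - by rewrite eqr_div // => /eqP e; apply/eqP; rewrite subr_eq0 e mulrC.
split=> [-> | <-]; first exact: expRK.
by rewrite lnK // posrE divr_gt0.
Qed.

Lemma mul_tr_incidence (c r : nat) (S P : 'I_r -> 'I_c) (V : 'cV[R]_c) j :
  ((incidence R S P)^T *m V) j 0 = V (P j) 0 - V (S j) 0.
Proof.
rewrite mxE; under eq_bigr => i _ do rewrite !mxE mulrBl.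
rewrite sumrB (bigD1 (P j)) // [X in _ - X](bigD1 (S j)) //= !eqxx !mul1r.
by rewrite !big1 ?addr0 // => i /negbTE ->; rewrite mul0r.
Qed.

Lemma thermo_eqE (m c r : nat) (Z : 'M[R]_(m, c)) (S P : 'I_r -> 'I_c)
    (kf kr : 'I_r -> R) (x : 'cV[R]_m) :
  (forall j, 0 < kf j) -> (forall j, 0 < kr j) ->
  thermo_eq Z S P kf kr x <->
  posv x /\ Lnv (Keq kf kr) = (incidence R S P)^T *m Z^T *m Lnv x.
Proof.
move=> kf_gt0 kr_gt0; set V := Z^T *m Lnv x.
have rateE j : rate Z S P kf kr x j 0 =
    kf j * expR (V (S j) 0) - kr j * expR (V (P j) 0).
  rewrite !mxE; congr (_ * expR _ - _ * expR _);
    by apply: eq_bigr => k _; rewrite !mxE.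
have rate0E : rate Z S P kf kr x = 0 <->
    forall j, ln (kf j / kr j) = V (P j) 0 - V (S j) 0.
  split=> [/matrixP e j | e].
  - by apply/(rate_eq0_ln _ _ (kf_gt0 j) (kr_gt0 j)); rewrite -rateE e mxE.
  - apply/matrixP => j k; rewrite ord1 rateE [RHS]mxE.
    exact/(rate_eq0_ln _ _ (kf_gt0 j) (kr_gt0 j)).
rewrite /thermo_eq rate0E -mulmxA; split=> -[px e]; split=> //.
- by apply/matrixP => j k; rewrite ord1 mul_tr_incidence -e !mxE.
- by move=> j; move/matrixP/(_ j 0): e; rewrite mul_tr_incidence !mxE.
Qed.

Lemma balancedE (m c r : nat) (Z : 'M[R]_(m, c)) (S P : 'I_r -> 'I_c)
    (kf kr : 'I_r -> R) :
  (forall j, 0 < kf j) -> (forall j, 0 < kr j) ->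
  balanced Z S P kf kr <->
  exists x, posv x /\ Lnv (Keq kf kr) = (incidence R S P)^T *m Z^T *m Lnv x.
Proof.
by move=> kf_gt0 kr_gt0; split=> -[x ex]; exists x; apply/thermo_eqE.
Qed.

Lemma posv_col_mx (m1 m2 : nat) (x1 : 'cV[R]_m1) (x2 : 'cV[R]_m2) :
  posv (col_mx x1 x2) <-> posv x1 /\ posv x2.
Proof.
split=> [px | [px1 px2] i].
- by split=> i; [move: (px (lshift m2 i)) | move: (px (rshift m1 i))];
    rewrite ?col_mxEu ?col_mxEd.
- rewrite -(splitK i); case: (fintype.split i) => k /=;
    by rewrite ?col_mxEu ?col_mxEd.
Qed.

Lemma Lnv_col_mx (m1 m2 : nat) (x1 : 'cV[R]_m1) (x2 : 'cV[R]_m2) :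
  Lnv (col_mx x1 x2) = col_mx (Lnv x1) (Lnv x2).
Proof. exact: map_col_mx. Qed.

Lemma posv_map_expR (m : nat) (u : 'cV[R]_m) : posv (map_mx expR u).
Proof. by move=> i; rewrite mxE expR_gt0. Qed.

Lemma Lnv_map_expR (m : nat) (u : 'cV[R]_m) : Lnv (map_mx expR u) = u.
Proof. by apply/matrixP => i j; rewrite !mxE expRK. Qed.

Section Interconnection.
Variables (c1 c2 r1 r2 : nat).

Lemma join_cplx_lshift (S1 : 'I_r1 -> 'I_c1) (S2 : 'I_r2 -> 'I_c2) j :
  join_cplx S1 S2 (lshift r2 j) = lshift c2 (S1 j).
Proof. by rewrite /join_cplx (unsplitK (inl j)). Qed.

Lemma join_cplx_rshift (S1 : 'I_r1 -> 'I_c1) (S2 : 'I_r2 -> 'I_c2) j :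
  join_cplx S1 S2 (rshift r1 j) = rshift c1 (S2 j).
Proof. by rewrite /join_cplx (unsplitK (inr j)). Qed.

Lemma join_const_lshift (k1 : 'I_r1 -> R) (k2 : 'I_r2 -> R) j :
  join_const k1 k2 (lshift r2 j) = k1 j.
Proof. by rewrite /join_const (unsplitK (inl j)). Qed.

Lemma join_const_rshift (k1 : 'I_r1 -> R) (k2 : 'I_r2 -> R) j :
  join_const k1 k2 (rshift r1 j) = k2 j.
Proof. by rewrite /join_const (unsplitK (inr j)). Qed.

Lemma join_const_gt0 (k1 : 'I_r1 -> R) (k2 : 'I_r2 -> R) :
  (forall j, 0 < k1 j) -> (forall j, 0 < k2 j) ->
  forall j, 0 < join_const k1 k2 j.
Proof. by move=> k1_gt0 k2_gt0 j; rewrite /join_const; case: (fintype.split j). Qed.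

Lemma incidence_join (S1 P1 : 'I_r1 -> 'I_c1) (S2 P2 : 'I_r2 -> 'I_c2) :
  incidence R (join_cplx S1 S2) (join_cplx P1 P2) =
  block_mx (incidence R S1 P1) 0 0 (incidence R S2 P2).
Proof.
apply/matrixP => i j; rewrite -(splitK i) -(splitK j).
case: (fintype.split i) => i'; case: (fintype.split j) => j' /=;
  rewrite ?block_mxEul ?block_mxEur ?block_mxEdl ?block_mxEdr !mxE
    ?join_cplx_lshift ?join_cplx_rshift ?eq_lshift ?eq_rshift
    ?eq_lrshift ?eq_rlshift ?subrr //.
Qed.

Lemma Keq_join (kf1 kr1 : 'I_r1 -> R) (kf2 kr2 : 'I_r2 -> R) :
  Keq (join_const kf1 kf2) (join_const kr1 kr2) =
  col_mx (Keq kf1 kr1) (Keq kf2 kr2).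
Proof.
apply/matrixP => j k; rewrite -(splitK j).
case: (fintype.split j) => j' /=;
  by rewrite ?col_mxEu ?col_mxEd !mxE ?join_const_lshift ?join_const_rshift.
Qed.

End Interconnection.

Lemma mulmx_interconnection (n1 b n2 c1 c2 r1 r2 : nat)
    (Zh1 : 'M[R]_(n1, c1)) (Zb1 : 'M[R]_(b, c1))
    (Zb2 : 'M[R]_(b, c2)) (Zh2 : 'M[R]_(n2, c2))
    (B1 : 'M[R]_(c1, r1)) (B2 : 'M[R]_(c2, r2))
    (u1 : 'cV[R]_n1) (ub : 'cV[R]_b) (u2 : 'cV[R]_n2) :
  (block_mx B1 0 0 B2)^T *m (interZ Zh1 Zb1 Zb2 Zh2)^T
    *m col_mx (col_mx u1 ub) u2 =
  col_mx (B1^T *m Zh1^T *m u1 + B1^T *m Zb1^T *m ub)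
         (B2^T *m Zh2^T *m u2 + B2^T *m Zb2^T *m ub).
Proof.
rewrite /interZ tr_block_mx !tr_col_mx !tr_row_mx !trmx0 -mulmxA.
rewrite !mul_row_col !mul_col_mx !mul0mx !add_col_mx !mul_row_col.
rewrite !mul0mx !addr0 !add0r.
by rewrite !mulmxDr !mulmxA (addrC (B2^T *m Zb2^T *m ub)).
Qed.

Lemma balanced_col_mx_log (n b c r : nat)
    (Zh : 'M[R]_(n, c)) (Zb : 'M[R]_(b, c)) (S P : 'I_r -> 'I_c) (kf kr : 'I_r -> R) :
  (forall j, 0 < kf j) -> (forall j, 0 < kr j) ->
  balanced (col_mx Zh Zb) S P kf kr ->
  exists uh ub, Lnv (Keq kf kr) =
    (incidence R S P)^T *m Zh^T *m uh + (incidence R S P)^T *m Zb^T *m ub.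
Proof.
move=> kf_gt0 kr_gt0 /(balancedE _ S P kf_gt0 kr_gt0) [x [_ ->]].
exists (Lnv (usubmx x)), (Lnv (dsubmx x)).
rewrite -{1}(vsubmxK x) Lnv_col_mx tr_col_mx -mulmxA mul_row_col.
by rewrite mulmxDr !mulmxA.
Qed.

Lemma balanced_interconnectionE (n1 b n2 c1 c2 r1 r2 : nat)
    (Zh1 : 'M[R]_(n1, c1)) (Zb1 : 'M[R]_(b, c1))
    (Zb2 : 'M[R]_(b, c2)) (Zh2 : 'M[R]_(n2, c2))
    (S1 P1 : 'I_r1 -> 'I_c1) (S2 P2 : 'I_r2 -> 'I_c2)
    (kf1 kr1 : 'I_r1 -> R) (kf2 kr2 : 'I_r2 -> R) :
  (forall j, 0 < kf1 j) -> (forall j, 0 < kr1 j) ->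
  (forall j, 0 < kf2 j) -> (forall j, 0 < kr2 j) ->
  let B1 := incidence R S1 P1 in
  let B2 := incidence R S2 P2 in
  balanced (interZ Zh1 Zb1 Zb2 Zh2) (join_cplx S1 S2) (join_cplx P1 P2)
    (join_const kf1 kf2) (join_const kr1 kr2) <->
  exists xh1 xh2 xb, [/\ posv xh1, posv xh2, posv xb &
    Lnv (col_mx (Keq kf1 kr1) (Keq kf2 kr2)) =
    col_mx (B1^T *m Zh1^T *m Lnv xh1 + B1^T *m Zb1^T *m Lnv xb)
           (B2^T *m Zh2^T *m Lnv xh2 + B2^T *m Zb2^T *m Lnv xb)].
Proof.
move=> kf1_gt0 kr1_gt0 kf2_gt0 kr2_gt0 B1 B2.
have kf_gt0 := join_const_gt0 kf1_gt0 kf2_gt0.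
have kr_gt0 := join_const_gt0 kr1_gt0 kr2_gt0.
rewrite (balancedE _ _ _ kf_gt0 kr_gt0).
split=> [[x [px e]] | [xh1 [xh2 [xb [p1 p2 pb e]]]]].
- rewrite -(vsubmxK x) -(vsubmxK (usubmx x)) in px e.
  move: px => /posv_col_mx [/posv_col_mx [p1 pb] p2].
  rewrite incidence_join Keq_join !Lnv_col_mx mulmx_interconnection in e.
  by exists (usubmx (usubmx x)), (dsubmx x), (dsubmx (usubmx x)); rewrite Lnv_col_mx.
- exists (col_mx (col_mx xh1 xb) xh2); split.
  + by apply/posv_col_mx; split=> //; apply/posv_col_mx.
  + rewrite incidence_join Keq_join !Lnv_col_mx mulmx_interconnection.
    by rewrite -Lnv_col_mx.
Qed.

End MassAction.

Theorem proposition6 (R : realType) (n1 b n2 c1 c2 r1 r2 : nat)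
  (Zh1 : 'M[R]_(n1, c1)) (Zb1 : 'M[R]_(b, c1))
  (Zb2 : 'M[R]_(b, c2)) (Zh2 : 'M[R]_(n2, c2))
  (S1 P1 : 'I_r1 -> 'I_c1) (S2 P2 : 'I_r2 -> 'I_c2)
  (kf1 kr1 : 'I_r1 -> R) (kf2 kr2 : 'I_r2 -> R)
  (hkf1 : forall j, 0 < kf1 j) (hkr1 : forall j, 0 < kr1 j)
  (hkf2 : forall j, 0 < kf2 j) (hkr2 : forall j, 0 < kr2 j)
  (bal1 : balanced (col_mx Zh1 Zb1) S1 P1 kf1 kr1)
  (bal2 : balanced (col_mx Zb2 Zh2) S2 P2 kf2 kr2) :
  let B1 := incidence R S1 P1 in
  let B2 := incidence R S2 P2 in
  let balI := balanced (interZ Zh1 Zb1 Zb2 Zh2)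
                (join_cplx S1 S2) (join_cplx P1 P2)
                (join_const kf1 kf2) (join_const kr1 kr2) in
  (balI <->
     exists (xh1 : 'cV[R]_n1) (xh2 : 'cV[R]_n2) (xb : 'cV[R]_b),
       [/\ posv xh1, posv xh2, posv xb &
         Lnv (col_mx (Keq kf1 kr1) (Keq kf2 kr2)) =
         row_mx (row_mx (col_mx (B1^T *m Zh1^T) 0) (col_mx 0 (B2^T *m Zh2^T)))
                (col_mx (B1^T *m Zb1^T) (B2^T *m Zb2^T))
         *m Lnv (col_mx (col_mx xh1 xh2) xb)])
  /\
  ((exists I1 I2 : {set 'I_b},
       [/\ I1 :|: I2 = [set: 'I_b], I1 :&: I2 = finset.set0,
         (forall k, k \in I1 ->
            exists y : 'cV[R]_n1, col k (B1^T *m Zb1^T) = (B1^T *m Zh1^T) *m y) &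
         (forall k, k \in I2 ->
            exists y : 'cV[R]_n2, col k (B2^T *m Zb2^T) = (B2^T *m Zh2^T) *m y)])
   -> balI).
Proof.
move=> B1 B2 balI.
have balIE := balanced_interconnectionE Zh1 Zb1 Zb2 Zh2 S1 P1 S2 P2
  hkf1 hkr1 hkf2 hkr2.
split.
- rewrite /balI balIE.
  split=> -[xh1 [xh2 [xb [p1 p2 pb e]]]]; exists xh1, xh2, xb;
    by split=> //; rewrite !Lnv_col_mx mul_bordered_diag_mx in e *.
-
  case=> I1 [I2 [I12 _ colI1 colI2]].
  have [uh1 [ub1 e1]] := balanced_col_mx_log hkf1 hkr1 bal1.
  have [ub2 [uh2 e2]] := balanced_col_mx_log hkf2 hkr2 bal2.
  have [u1 [u2 [ub [f1 f2]]]] :=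
    common_boundary_solution I12 colI1 colI2 uh1 uh2 ub1 ub2.
  apply/balIE; exists (map_mx expR u1), (map_mx expR u2), (map_mx expR ub).
  rewrite !Lnv_map_expR Lnv_col_mx e1 e2 -/B1 -/B2 (addrC (_ *m ub2)) -f1 -f2.
  by split; [exact: posv_map_expR .. |].
Qed.
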